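(* Inside the quotient field $Q(\mathbb{Z}[q]^{\mathbb{N}})$ one has $$\mathbb{Z}[q]^{\mathbb{N}}[\Phi_{\mathbb{N}}^{-1}]=\mathbb{Z}[q]^{\mathbb{N}}+\mathbb{Z}[q,q^{-1}][\Phi_{\mathbb{N}}^{-1}].$$
   Context: $q$ is an indeterminate, $\Phi_n(q)$ the $n$th cyclotomic polynomial, and $\Phi_{\mathbb{N}}^*$ the multiplicative subset of $\mathbb{Z}[q]$ generated by all $\Phi_n(q)$, $n\in\mathbb{N}$. $\mathbb{Z}[q]^{\mathbb{N}}=\varprojlim_{f\in\Phi_{\mathbb{N}}^*}\mathbb{Z}[q]/(f)$; it is an integral domain in which $q$ is invertible, and the natural map $\mathbb{Z}[q,q^{-1}]\to\mathbb{Z}[q]^{\mathbb{N}}$ is injective, so $\mathbb{Q}(q)\subset Q(\mathbb{Z}[q]^{\mathbb{N}})$, where $Q(\cdot)$ denotes the quotient field. $\mathbb{Z}[q]^{\mathbb{N}}[\Phi_{\mathbb{N}}^{-1}]$ is the subring of $Q(\mathbb{Z}[q]^{\mathbb{N}})$ of fractions $f/g$ with $f\in\mathbb{Z}[q]^{\mathbb{N}}$, $g\in\Phi_{\mathbb{N}}^*$, and $\mathbb{Z}[q,q^{-1}][\Phi_{\mathbb{N}}^{-1}]$ is the subring of $\mathbb{Q}(q)$ of fractions $f/g$ with $f\in\mathbb{Z}[q,q^{-1}]$, $g\in\Phi_{\mathbb{N}}^*$. *)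

From HB Require Import structures.
From mathcomp Require Import all_boot all_order all_algebra all_field.
Set Implicit Arguments. Unset Strict Implicit. Unset Printing Implicit Defensive.
Import Order.TTheory GRing.Theory Num.Theory.
Local Open Scope ring_scope.

Definition PhiStar (f : {poly int}) : Prop :=
  exists s : seq nat, all (fun n => (0 < n)%N) s /\ f = \prod_(n <- s) 'Phi_n.

Definition pdvd (f g : {poly int}) : Prop := exists c : {poly int}, g = c * f.

Definition pcong (f a b : {poly int}) : Prop := pdvd f (a - b).

(** Elements of Z[q]^N = lim_{f in Phi_N^*} Z[q]/(f) are represented by
    families x with x f a representative of the f-component in Z[q]/(f),
    compatible under the transition maps Z[q]/(g) -> Z[q]/(f) for f | g.
    (The values of x outside Phi_N^* are irrelevant.) *)
Definition habiro (x : {poly int} -> {poly int}) : Prop :=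
  forall f g, PhiStar f -> PhiStar g -> pdvd f g -> pcong f (x g) (x f).

Definition heq (x y : {poly int} -> {poly int}) : Prop :=
  forall f, PhiStar f -> pcong f (x f) (y f).

Definition hadd (x y : {poly int} -> {poly int}) : {poly int} -> {poly int} :=
  fun f => x f + y f.
Definition hmul (x y : {poly int} -> {poly int}) : {poly int} -> {poly int} :=
  fun f => x f * y f.
Definition hpoly (p : {poly int}) : {poly int} -> {poly int} := fun _ => p.

From mathcomp Require Import all_boot all_order all_algebra all_field.
From mathcomp Require Import ring.
Import GRing.Theory.
Local Open Scope ring_scope.
Set Implicit Arguments. Unset Strict Implicit. Unset Printing Implicit Defensive.

(* Every f in Phi_N^* is monic with constant term a unit.  Hence, for x in
   Z[q]^N and g in Phi_N^*, the differences x(fg) - x(g) are exactly divisible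
   by g and define y in Z[q]^N with g y = x - x(g); thus x/g = y + x(g)/g.
   Conversely q is invertible modulo every f in Phi_N^*, and these inverses
   form an element q^-1 of Z[q]^N, so y + p/(q^k h) = (y h + p q^-k)/h. *)

Lemma pdvdMl f a b : pdvd f a -> pdvd f (b * a).
Proof. by case=> c ->; exists (b * c); rewrite mulrA. Qed.

Lemma pdvdMr f a b : pdvd f a -> pdvd f (a * b).
Proof. by rewrite mulrC; apply: pdvdMl. Qed.

Lemma pdvd_trans f g a : pdvd f g -> pdvd g a -> pdvd f a.
Proof. by move=> [c ->] [d ->]; exists (d * c); rewrite mulrA. Qed.

Lemma pdvd_mul2r f g a : g != 0 -> pdvd (f * g) (a * g) -> pdvd f a.
Proof. by move=> g_neq0 [c]; rewrite mulrA => /(mulIf g_neq0) ->; exists c. Qed.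

Lemma pdvd_divpK g a : g \is monic -> pdvd g a -> a %/ g * g = a.
Proof. by move=> g_monic [c ->]; rewrite Pdiv.IdomainMonic.mulpK. Qed.

Lemma pcong_refl f a : pcong f a a.
Proof. by exists 0; rewrite subrr mul0r. Qed.

Lemma pcong_sym f a b : pcong f a b -> pcong f b a.
Proof. by case=> c Dc; exists (- c); rewrite mulNr -Dc opprB. Qed.

Lemma pcong_trans f a b c : pcong f a b -> pcong f b c -> pcong f a c.
Proof.
by move=> [d Dd] [e De]; exists (d + e); rewrite mulrDl -Dd -De addrA subrK.
Qed.

Lemma pcong_dvd f g a b : pdvd f g -> pcong g a b -> pcong f a b.
Proof. exact: pdvd_trans. Qed.

Lemma pcongD f a b c d : pcong f a b -> pcong f c d -> pcong f (a + c) (b + d).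
Proof.
by move=> [u Du] [v Dv]; exists (u + v); rewrite mulrDl -Du -Dv opprD addrACA.
Qed.

Lemma pcongM f a b c d : pcong f a b -> pcong f c d -> pcong f (a * c) (b * d).
Proof.
move=> ab cd; rewrite /pcong (_ : a * c - b * d = (a - b) * c + b * (c - d)).
  move: (pdvdMr c ab) (pdvdMl b cd) => [u ->] [v ->].
  by exists (u + v); rewrite mulrDl.
by rewrite mulrBl mulrBr addrA subrK.
Qed.

Lemma pcongX f a b k : pcong f a b -> pcong f (a ^+ k) (b ^+ k).
Proof.
move=> ab; elim: k => [|k IHk]; first exact: pcong_refl.
by rewrite !exprS; apply: pcongM.
Qed.

Lemma pcong_inv_unique f u w w' :
  pcong f (u * w) 1 -> pcong f (u * w') 1 -> pcong f w w'.
Proof.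
move=> uw uw'; rewrite -[w]mul1r -[w']mul1r.
apply: pcong_trans (pcongM (pcong_sym uw') (pcong_refl f w)) _.
rewrite (_ : u * w' * w = u * w * w'); last by ring.
exact: pcongM uw (pcong_refl f w').
Qed.

Lemma PhiStarM f g : PhiStar f -> PhiStar g -> PhiStar (f * g).
Proof.
move=> [s [s_gt0 ->]] [t [t_gt0 ->]]; exists (s ++ t).
by rewrite all_cat s_gt0 t_gt0 big_cat.
Qed.

Lemma PhiStar_monic f : PhiStar f -> f \is monic.
Proof. by move=> [s [_ ->]]; apply: monic_prod => n _; apply: Cyclotomic_monic. Qed.

(* Evaluate the factorisation [X^n - 1 = \prod_(d | n) Phi_d] at 0. *)
Lemma Cyclotomic_coef0_unit n : (0 < n)%N -> 'Phi_n`_0 \is a GRing.unit.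
Proof.
move=> n_gt0; have /(congr1 (horner^~ 0)) := prod_Cyclotomic n_gt0.
rewrite horner_prod (big_rem n) ?divisors_id //= !hornerE expr0n eqn0Ngt n_gt0.
rewrite sub0r horner_coef0 => Phi0.
have : 'Phi_n`_0 * \prod_(i <- rem n (divisors n)) ('Phi_i).[0] \is a GRing.unit.
  by rewrite Phi0 unitrN1.
by rewrite unitrM => /andP[].
Qed.

Lemma PhiStar_coef0_unit f : PhiStar f -> f`_0 \is a GRing.unit.
Proof.
move=> [s [+ ->]]; elim: s => [|n s IHs] /=; first by rewrite big_nil coefC unitr1.
move=> /andP[n_gt0 s_gt0]; rewrite big_cons -horner_coef0 hornerM !horner_coef0.
by rewrite unitrM Cyclotomic_coef0_unit // IHs.
Qed.

Definition Xinv_mod (R : comUnitRingType) (f : {poly R}) : {poly R} :=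
  - (f`_0)^-1 *: drop_poly 1 f.

Lemma mulX_Xinv_mod (R : comUnitRingType) (f : {poly R}) :
  f`_0 \is a GRing.unit -> 'X * Xinv_mod f = 1 - (f`_0)^-1 *: f.
Proof.
move=> f0_unit; rewrite /Xinv_mod; set c := f`_0 in f0_unit *.
have take1 : take_poly 1 f = c%:P.
  by apply/polyP => -[|i]; rewrite coef_take_poly coefC.
rewrite -[f in RHS](poly_take_drop 1) take1 scalerDr scale_polyC mulVr //.
by rewrite opprD addrA subrr add0r scaleNr mulrN -scalerAr mulrC.
Qed.

Lemma Xinv_mod_cong f : PhiStar f -> pcong f ('X * Xinv_mod f) 1.
Proof.
move=> Phi_f; rewrite /pcong mulX_Xinv_mod ?PhiStar_coef0_unit //.
by exists (- (f`_0)^-1%:P); rewrite addrAC subrr add0r mulNr mul_polyC.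
Qed.

Definition hexp (x : {poly int} -> {poly int}) (k : nat) : {poly int} -> {poly int} :=
  fun f => x f ^+ k.

Lemma habiro_poly p : habiro (hpoly p).
Proof. by move=> f g *; apply: pcong_refl. Qed.

Lemma habiro_add x y : habiro x -> habiro y -> habiro (hadd x y).
Proof. by move=> hx hy f g *; apply: pcongD; [apply: hx | apply: hy]. Qed.

Lemma habiro_mul x y : habiro x -> habiro y -> habiro (hmul x y).
Proof. by move=> hx hy f g *; apply: pcongM; [apply: hx | apply: hy]. Qed.

Lemma habiro_exp x k : habiro x -> habiro (hexp x k).
Proof. by move=> hx f g *; apply: pcongX; apply: hx. Qed.

Lemma habiro_Xinv_mod : habiro (@Xinv_mod _).
Proof.
move=> f g Phi_f Phi_g f_dvd_g; apply: (pcong_inv_unique (u := 'X)).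
  exact: pcong_dvd f_dvd_g (Xinv_mod_cong Phi_g).
exact: Xinv_mod_cong.
Qed.

Lemma habiro_sub_component_dvd x g : habiro x -> PhiStar g ->
  exists y, habiro y /\ heq (hmul (hpoly g) y) (hadd x (hpoly (- x g))).
Proof.
move=> hx Phi_g; pose y f := (x (f * g) - x g) %/ g.
have g_monic := PhiStar_monic Phi_g.
have Dy f : PhiStar f -> y f * g = x (f * g) - x g.
  move=> Phi_f; apply: pdvd_divpK g_monic _.
  by apply: hx; [| exact: PhiStarM | exists f].
exists y; split=> [f f' Phi_f Phi_f' f_dvd_f' | f Phi_f].
- apply: (pdvd_mul2r (monic_neq0 g_monic)).
  rewrite mulrBl Dy // Dy // opprB addrA subrK.
  apply: hx; [exact: PhiStarM | exact: PhiStarM |].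
  by case: f_dvd_f' => c ->; exists c; rewrite mulrA.
- rewrite /hmul /hpoly /hadd mulrC Dy //.
  apply: pcongD (pcong_refl _ _).
  by apply: hx => //; [exact: PhiStarM | exists g; rewrite mulrC].
Qed.

Theorem proposition7p4 :
  (forall (x : {poly int} -> {poly int}) (g : {poly int}),
     habiro x -> PhiStar g ->
     exists (y : {poly int} -> {poly int}) (p : {poly int}) (k : nat) (h : {poly int}),
       [/\ habiro y, PhiStar h &
         heq (hmul x (hpoly (h * 'X ^+ k)))
             (hmul (hpoly g) (hadd (hmul y (hpoly (h * 'X ^+ k))) (hpoly p)))])
  /\
  (forall (y : {poly int} -> {poly int}) (p : {poly int}) (k : nat) (h : {poly int}),
     habiro y -> PhiStar h ->
     exists (x : {poly int} -> {poly int}) (g : {poly int}),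
       [/\ habiro x, PhiStar g &
         heq (hmul x (hpoly (h * 'X ^+ k)))
             (hmul (hpoly g) (hadd (hmul y (hpoly (h * 'X ^+ k))) (hpoly p)))]).
Proof.
split=> [x g hx Phi_g | y p k h hy Phi_h].
- have [y [hy Dy]] := habiro_sub_component_dvd hx Phi_g.
  exists y, (x g), 0%N, g; split=> // f /Dy; rewrite /hmul /hadd /hpoly expr0 mulr1.
  move=> [c Dc]; exists (- c * g); rewrite mulrAC mulNr -Dc; ring.
- pose x := hadd (hmul y (hpoly h)) (hmul (hpoly p) (hexp (@Xinv_mod _) k)).
  exists x, h; split=> [|//|f Phi_f].
    apply: habiro_add; apply: habiro_mul => //; try exact: habiro_poly.
    exact: habiro_exp habiro_Xinv_mod.
  have [c Dc] := pcongX k (Xinv_mod_cong Phi_f).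
  exists (p * h * c); rewrite -[RHS]mulrA -Dc expr1n exprMn.
  rewrite /x /hadd /hmul /hpoly /hexp; ring.
Qed.
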